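(* Let $\xi:(\tau_{\min},\tau_{\max})\to\mathbb{R}^4$ be a worldline as described in the context, and let $x$ be an event in the future of $\xi$. (i) Suppose $\xi$ is bounded away from the past light-cone of $x$ with respect to a given inertial coordinate system. Then $\xi$ is bounded away from the past light-cone of $x$ with respect to every inertial coordinate system obtained from the given one by an orthochronous Lorentz transformation $\tilde x^a=\Lambda^a{}_b x^b$ with $\Lambda^0{}_0>0$. (ii) Suppose $\xi$ is bounded away from the past light-cone of this one event $x$. Then the future of $\xi$ is all of $\mathbb{R}^4$, and $\xi$ is bounded away from the past light-cone of every event $y\in\mathbb{R}^4$.
   Context: Minkowski spacetime is $\mathbb{R}^4$ with inertial coordinates $(x^0,x^1,x^2,x^3)$ and metric $\eta_{ab}=\mathrm{diag}(-1,1,1,1)$; units with $c=1$. A worldline is an inextendible, future-oriented, timelike $C^\infty$ curve $\xi(\tau)=(\xi^0(\tau),\dots,\xi^3(\tau))$, $\tau\in(\tau_{\min},\tau_{\max})$ with $\tau_{\min}\in\mathbb{R}\cup\{-\infty\}$, $\tau_{\max}\in\mathbb{R}\cup\{+\infty\}$, parametrized by proper time: $\eta_{ab}\dot\xi^a\dot\xi^b=-1$. An event $y$ is in the chronological past of $x$ if $x-y$ is timelike and future-pointing ($x^0>y^0$). The future of $\xi$ is the set of events that can be reached from a point of $\xi$ along a future-oriented timelike curve. For events $x,y$ with $y$ in the chronological past of $x$, $D(x-y)=\sqrt{-\eta_{ab}(x^a-y^a)(x^b-y^b)}$. For $x$ in the future of $\xi$, for $\zeta\in(0,\infty)$ let $\varpi(\zeta,x)$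 denote the unique $\tau$ with $\xi(\tau)$ in the chronological past of $x$ and $D(x-\xi(\tau))=\zeta$ (the map $\tau\mapsto D(x-\xi(\tau))$ is strictly decreasing along the part of the worldline in the chronological past of $x$, tending to $\infty$ as $\tau\to\tau_{\min}$). Write $x^a-\xi^a(\varpi(\zeta,x))=\zeta\big(\cosh\psi(\zeta,x)\,\delta^a_0+\sinh\psi(\zeta,x)\,\mu^\rho(\zeta,x)\,\delta^a_\rho\big)$ with a spatial unit vector $\mu$ (Euclidean norm $1$, $\rho=1,2,3$); thus $\cosh\psi(\zeta,x)=(x^0-\xi^0(\tau))/D(x-\xi(\tau))$ at $\tau=\varpi(\zeta,x)$. Definition: $\xi$ is bounded away from the past light-cone of $x$ (in the given inertial coordinates) if $\psi(\zeta,x)$ stays bounded as $\zeta\to\infty$; equivalently, there are $\delta>0$ and $\tau_1$ such that $(x^0-\xi^0(\tau))/D(x-\xi(\tau))<\delta$ for all $\tau_{\min}<\tau<\tau_1$. *)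

From Stdlib Require Import Reals Lra.
From Coquelicot Require Import Coquelicot.
Open Scope R_scope.

(* Events of Minkowski space R^4 are represented as functions nat -> R;
   only the components 0,1,2,3 are meaningful (0 = time coordinate). *)
Definition event := nat -> R.

Definition mink (u v : event) : R :=
  - (u 0%nat * v 0%nat) + u 1%nat * v 1%nat + u 2%nat * v 2%nat + u 3%nat * v 3%nat.

Definition evsub (x y : event) : event := fun a => x a - y a.

Definition evEq (x y : event) : Prop := forall a : nat, (a < 4)%nat -> x a = y a.

Definition timelike_future (v : event) : Prop := mink v v < 0 /\ 0 < v 0%nat.

Definition chron_past (y x : event) : Prop := timelike_future (evsub x y).

Definition Dist (x y : event) : R := sqrt (- mink (evsub x y) (evsub x y)).

Definition in_dom (tmin tmax : Rbar) (t : R) : Prop :=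
  Rbar_lt tmin (Finite t) /\ Rbar_lt (Finite t) tmax.

Definition comp (xi : R -> event) (a : nat) : R -> R := fun t => xi t a.

Definition vel (xi : R -> event) (t : R) : event := fun a => Derive (comp xi a) t.

Definition lower_end (tmin : Rbar) : (R -> Prop) -> Prop :=
  match tmin with
  | Finite a => at_right a
  | _ => Rbar_locally m_infty
  end.
Definition upper_end (tmax : Rbar) : (R -> Prop) -> Prop :=
  match tmax with
  | Finite b => at_left b
  | _ => Rbar_locally p_infty
  end.

Definition curve_converges (xi : R -> event) (F : (R -> Prop) -> Prop) (p : event) : Prop :=
  forall a : nat, (a < 4)%nat -> filterlim (comp xi a) F (locally (p a)).

Definition worldline (tmin tmax : Rbar) (xi : R -> event) : Prop :=
  tmin <> p_infty /\ tmax <> m_infty /\ Rbar_lt tmin tmax /\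
  (forall (a n : nat) (t : R), (a < 4)%nat -> in_dom tmin tmax t ->
     ex_derive (Derive_n (comp xi a) n) t) /\
  (forall t : R, in_dom tmin tmax t ->
     mink (vel xi t) (vel xi t) = -1 /\ 0 < vel xi t 0%nat) /\
  (* inextendible: no endpoint at either end *)
  (forall p : event, ~ curve_converges xi (lower_end tmin) p) /\
  (forall p : event, ~ curve_converges xi (upper_end tmax) p).

Definition ft_curve (gamma : R -> event) (p q : event) : Prop :=
  evEq (gamma 0) p /\ evEq (gamma 1) q /\
  (forall (a : nat) (s : R), (a < 4)%nat -> 0 <= s <= 1 -> ex_derive (comp gamma a) s) /\
  (forall s : R, 0 <= s <= 1 -> timelike_future (vel gamma s)).

Definition in_future (tmin tmax : Rbar) (xi : R -> event) (x : event) : Prop :=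
  exists t : R, in_dom tmin tmax t /\ exists gamma : R -> event, ft_curve gamma (xi t) x.

Definition bounded_away (tmin tmax : Rbar) (xi : R -> event) (x : event) : Prop :=
  exists delta tau1 : R, 0 < delta /\ in_dom tmin tmax tau1 /\
    forall tau : R, in_dom tmin tmax tau -> tau < tau1 ->
      chron_past (xi tau) x /\ (x 0%nat - xi tau 0%nat) / Dist x (xi tau) < delta.

Definition sum4 (f : nat -> R) : R := f 0%nat + f 1%nat + f 2%nat + f 3%nat.
Definition mat_apply (L : nat -> nat -> R) (x : event) : event :=
  fun a => sum4 (fun b => L a b * x b).

Definition eta (a b : nat) : R :=
  if Nat.eqb a b then (if Nat.eqb a 0 then -1 else 1) else 0.

Definition orthochronous_lorentz (L : nat -> nat -> R) : Prop :=
  (forall a b : nat, (a < 4)%nat -> (b < 4)%nat ->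
     sum4 (fun c => sum4 (fun d => eta c d * L c a * L d b)) = eta a b) /\
  0 < L 0%nat 0%nat.

From Pilot Require Import Defs.
From Stdlib Require Import Reals Lra Lia Classical FunctionalExtensionality.
From Coquelicot Require Import Coquelicot.
Open Scope R_scope.

(** (i) An orthochronous Lorentz transformation preserves the Minkowski form
    and the future time-cone, and the new time component of a future timelike
    vector is at most a fixed multiple of the old one; so the bound on
    cosh psi survives, up to a constant factor.

    (ii) Along a worldline [xi^0] and every [xi^0 +- xi^i] are increasing;
    if [xi^0] stayed bounded below towards the past, all of them, hence the
    curve, would converge, contradicting inextendibility.  Thus [xi^0 -> -oo],
    and by the bound on cosh psi also [D(x - xi) -> +oo].  For a fixed event
    [y], the vector [y - xi = (x - xi) + (y - x)] then has Minkowski square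
    [-D^2 + O(D)]: it is eventually future timelike with cosh psi still
    bounded, and the straight segment from [xi] to [y] is a timelike curve. *)

Lemma filterlim_Rminus {T} (F : (T -> Prop) -> Prop) {FF : Filter F}
    (f g : T -> R) (a b : R) :
  filterlim f F (locally a) -> filterlim g F (locally b) ->
  filterlim (fun t => f t - g t) F (locally (a - b)).
Proof.
  intros Hf Hg.
  exact (filterlim_comp_2 f (fun t => opp (g t)) plus Hf
    (filterlim_comp _ _ _ g opp _ _ _ Hg (filterlim_opp b))
    (filterlim_plus a (opp b))).
Qed.

Lemma increasing_of_derive_pos (P : R -> Prop) (f df : R -> R) :
  (forall s t u, P s -> P u -> s <= t <= u -> P t) ->
  (forall t, P t -> is_derive f t (df t) /\ 0 < df t) ->
  forall s t, P s -> P t -> s < t -> f s < f t.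
Proof.
  intros Hconv Hd s t Ps Pt Hst.
  assert (HP : forall c, s <= c <= t -> P c) by (intros c Hc; exact (Hconv s c t Ps Pt Hc)).
  destruct (MVT_gen f s t df) as [c [Hc Hmvt]];
    rewrite ?Rmin_left, ?Rmax_right in * by lra.
  - intros c Hc. apply Hd, HP. lra.
  - intros c Hc. apply continuity_pt_filterlim, (@ex_derive_continuous R_AbsRing R_NormedModule).
    exists (df c). apply Hd, HP. exact Hc.
  - assert (0 < df c) by (apply Hd, HP; exact Hc).
    assert (0 < df c * (t - s)) by (apply Rmult_lt_0_compat; lra). lra.
Qed.

#[export] Instance lower_end_filter (tmin : Rbar) : Filter (lower_end tmin).
Proof.
  destruct tmin as [a| |]; simpl.
  - apply at_right_proper_filter.
  - apply Rbar_locally_filter.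
  - apply Rbar_locally_filter.
Qed.

Lemma lower_end_le (tmin : Rbar) (t0 : R) : tmin <> p_infty -> Rbar_lt tmin t0 ->
  lower_end tmin (fun t : R => Rbar_lt tmin t /\ t <= t0).
Proof.
  intros Hp Ht0. destruct tmin as [a| |]; simpl in *.
  - exists (mkposreal (t0 - a) ltac:(lra)). intros t Hball Hat.
    change (Rabs (t - a) < t0 - a) in Hball. apply Rabs_lt_between in Hball. lra.
  - congruence.
  - exists t0. intros t Ht. split; [exact I | lra].
Qed.

Lemma lower_end_nondecreasing_lim (tmin : Rbar) (t1 : R) (f : R -> R) (m : R) :
  tmin <> p_infty -> Rbar_lt tmin t1 ->
  (forall s t : R, Rbar_lt tmin s -> s <= t <= t1 -> f s <= f t) ->
  (forall t : R, Rbar_lt tmin t -> t <= t1 -> m <= f t) ->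
  exists l, filterlim f (lower_end tmin) (locally l).
Proof.
  intros Hp Ht1 Hmono Hbd.
  set (E := fun y => exists t : R, (Rbar_lt tmin t /\ t <= t1) /\ y = - f t).
  destruct (completeness E) as [L [Hub Hlub]].
  - exists (- m). intros y [t [[Ht Htt] ->]]. specialize (Hbd t Ht Htt). lra.
  - exists (- f t1), t1. split; [split; [exact Ht1 | lra] | reflexivity].
  - exists (- L). apply filterlim_locally. intros eps.
    assert (Hnear : exists t0 : R, (Rbar_lt tmin t0 /\ t0 <= t1) /\ L - eps < - f t0).
    { apply NNPP. intros Hn.
      assert (L <= L - eps).
      { apply Hlub. intros y [t [Ht ->]]. apply Rnot_lt_le. intros Hlt. apply Hn. exists t. split; assumption. }
      pose proof (cond_pos eps). lra. }
    destruct Hnear as [t0 [[Ht0 Ht01] Heps]].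
    apply (filter_imp (fun t : R => Rbar_lt tmin t /\ t <= t0)); [|exact (lower_end_le tmin t0 Hp Ht0)].
    intros t [Ht Htt0].
    assert (f t <= f t0) by (apply Hmono; [exact Ht | lra]).
    assert (- f t <= L) by (apply Hub; exists t; split; [split; [exact Ht | lra] | reflexivity]).
    change (Rabs (f t - - L) < eps). apply Rabs_lt_between. lra.
Qed.

Definition norm1 (v : event) : R := sum4 (fun a => Rabs (v a)).

Lemma spatial_lt_time (v : event) (i : nat) : timelike_future v -> (0 < i < 4)%nat ->
  Rabs (v i) < v 0%nat.
Proof.
  intros [Hm H0] Hi. unfold mink in Hm.
  assert (v i * v i < v 0%nat * v 0%nat) by (destruct i as [|[|[|[|]]]]; try lia; nra).
  apply Rabs_def1; nra.
Qed.

Lemma Rabs_comb_le_time (v : event) (c0 c1 c2 c3 : R) : timelike_future v ->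
  Rabs (c0 * v 0%nat + c1 * v 1%nat + c2 * v 2%nat + c3 * v 3%nat)
    <= (Rabs c0 + Rabs c1 + Rabs c2 + Rabs c3) * v 0%nat.
Proof.
  intros Hv.
  assert (Hc : forall c i, (0 < i < 4)%nat -> Rabs (c * v i) <= Rabs c * v 0%nat).
  { intros c i Hi. rewrite Rabs_mult. apply Rmult_le_compat_l; [apply Rabs_pos|].
    left. exact (spatial_lt_time v i Hv Hi). }
  assert (H0 : Rabs (c0 * v 0%nat) = Rabs c0 * v 0%nat).
  { rewrite Rabs_mult, (Rabs_right (v 0%nat)); [reflexivity | left; apply Hv]. }
  pose proof (Hc c1 1%nat ltac:(lia)) as H1.
  pose proof (Hc c2 2%nat ltac:(lia)) as H2.
  pose proof (Hc c3 3%nat ltac:(lia)) as H3.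
  pose proof (Rle_abs (c0 * v 0%nat)). pose proof (Rle_abs (- (c0 * v 0%nat))).
  rewrite Rabs_Ropp in *.
  apply Rabs_le_between in H1, H2, H3. apply Rabs_le_between. lra.
Qed.

Lemma Rabs_mink_le (w u : event) : timelike_future u ->
  Rabs (mink w u) <= norm1 w * u 0%nat.
Proof.
  intros Hu. unfold norm1, sum4. rewrite <- (Rabs_Ropp (w 0%nat)).
  replace (mink w u) with
    (- w 0%nat * u 0%nat + w 1%nat * u 1%nat + w 2%nat * u 2%nat + w 3%nat * u 3%nat)
    by (unfold mink; ring).
  exact (Rabs_comb_le_time u _ _ _ _ Hu).
Qed.

Lemma Rabs_time_le_norm1 (w : event) : Rabs (w 0%nat) <= norm1 w.
Proof.
  unfold norm1, sum4. pose proof (Rabs_pos (w 1%nat)).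
  pose proof (Rabs_pos (w 2%nat)). pose proof (Rabs_pos (w 3%nat)). lra.
Qed.

Lemma proper_time_le_time (u : event) : timelike_future u -> sqrt (- mink u u) <= u 0%nat.
Proof.
  intros [Hu Hu0]. rewrite <- (sqrt_square (u 0%nat)) by lra.
  apply sqrt_le_1_alt. unfold mink. nra.
Qed.

Lemma mink_mat_apply (L : nat -> nat -> R) (v : event) : orthochronous_lorentz L ->
  mink (mat_apply L v) (mat_apply L v) = mink v v.
Proof.
  intros [HL _].
  set (G := fun a b => sum4 (fun c => sum4 (fun d => eta c d * L c a * L d b))).
  assert (HG : forall a b, (a < 4)%nat -> (b < 4)%nat -> G a b = eta a b) by exact HL.
  transitivity (sum4 (fun a => sum4 (fun b => v a * v b * G a b))).
  - unfold mink, mat_apply, G, sum4, eta. simpl. ring.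
  - unfold sum4. rewrite !HG by lia. unfold eta, mink. simpl. ring.
Qed.

Lemma mat_apply_time_pos (L : nat -> nat -> R) (v : event) : orthochronous_lorentz L ->
  timelike_future v -> 0 < mat_apply L v 0%nat.
Proof.
  intros HL [Hv Hv0].
  destruct (Rlt_or_le 0 (mat_apply L v 0%nat)) as [Hpos | Hneg]; [exact Hpos | exfalso].
  (* The segment from e_0 to v stays future timelike, and its image has time
     component L00 > 0 at e_0 and <= 0 at v, so it meets a spatial vector. *)
  set (A := L 0%nat 0%nat). set (B := mat_apply L v 0%nat) in Hneg |- *.
  assert (HA : 0 < A) by apply HL.
  set (s := A / (A - B)).
  assert (Hs : 0 < s <= 1).
  { unfold s. split; [apply Rdiv_lt_0_compat; lra|]. apply Rle_div_l; lra. }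
  set (w := fun a : nat => (if Nat.eqb a 0 then 1 - s else 0) + s * v a).
  assert (Hw : mink w w < 0).
  { assert (Hsv : s * s * mink v v < 0).
    { assert (0 < s * s) by (apply Rmult_lt_0_compat; lra). nra. }
    assert (Hdiff : mink w w - s * s * mink v v
                    = (s * v 0%nat) ^ 2 - (1 - s + s * v 0%nat) ^ 2)
      by (unfold mink, w; simpl; ring).
    assert (0 < s * v 0%nat) by nra. nra. }
  assert (Hw0 : mat_apply L w 0%nat = 0).
  { transitivity ((1 - s) * A + s * B).
    - unfold mat_apply, w, sum4, A, B, mat_apply, sum4. simpl. ring.
    - unfold s. field. lra. }
  rewrite <- (mink_mat_apply L w HL) in Hw. unfold mink in Hw. rewrite Hw0 in Hw. nra.
Qed.

Lemma mat_apply_time_le (L : nat -> nat -> R) (v : event) : timelike_future v ->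
  mat_apply L v 0%nat <= norm1 (L 0%nat) * v 0%nat.
Proof.
  intros Hv. eapply Rle_trans; [apply Rle_abs|]. exact (Rabs_comb_le_time v _ _ _ _ Hv).
Qed.

Lemma evsub_mat_apply (L : nat -> nat -> R) (x y : event) :
  evsub (mat_apply L x) (mat_apply L y) = mat_apply L (evsub x y).
Proof.
  apply functional_extensionality. intros a. unfold evsub, mat_apply, sum4. ring.
Qed.

Lemma chron_past_lorentz (L : nat -> nat -> R) (p x : event) : orthochronous_lorentz L ->
  chron_past p x ->
  chron_past (mat_apply L p) (mat_apply L x) /\
  (mat_apply L x 0%nat - mat_apply L p 0%nat) / Dist (mat_apply L x) (mat_apply L p)
    <= norm1 (L 0%nat) * ((x 0%nat - p 0%nat) / Dist x p).
Proof.
  intros HL Hpx.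
  change (mat_apply L x 0%nat - mat_apply L p 0%nat)
    with (evsub (mat_apply L x) (mat_apply L p) 0%nat).
  change (x 0%nat - p 0%nat) with (evsub x p 0%nat).
  unfold chron_past, timelike_future, Dist in *.
  rewrite evsub_mat_apply, mink_mat_apply by exact HL.
  set (u := evsub x p) in *. destruct Hpx as [Hu Hu0].
  split; [split; [exact Hu | exact (mat_apply_time_pos L u HL (conj Hu Hu0))]|].
  unfold Rdiv. rewrite <- Rmult_assoc. apply Rmult_le_compat_r.
  - left. apply Rinv_0_lt_compat, sqrt_lt_R0. lra.
  - exact (mat_apply_time_le L u (conj Hu Hu0)).
Qed.

Lemma bounded_away_lorentz (tmin tmax : Rbar) (xi : R -> event) (x : event)
    (L : nat -> nat -> R) :
  orthochronous_lorentz L -> bounded_away tmin tmax xi x ->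
  bounded_away tmin tmax (fun t => mat_apply L (xi t)) (mat_apply L x).
Proof.
  intros HL [delta [tau1 [Hd [Ht1 H]]]].
  assert (HK : 0 < norm1 (L 0%nat)).
  { destruct HL as [_ HL0]. unfold norm1, sum4.
    pose proof (Rabs_pos_lt (L 0%nat 0%nat) ltac:(lra)).
    pose proof (Rabs_pos (L 0%nat 1%nat)). pose proof (Rabs_pos (L 0%nat 2%nat)).
    pose proof (Rabs_pos (L 0%nat 3%nat)). lra. }
  exists (norm1 (L 0%nat) * delta), tau1.
  split; [apply Rmult_lt_0_compat; lra|]. split; [exact Ht1|].
  intros tau Htau Hlt. destruct (H tau Htau Hlt) as [Hpx Hratio].
  destruct (chron_past_lorentz L (xi tau) x HL Hpx) as [HLpx HLratio].
  split; [exact HLpx|].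
  eapply Rle_lt_trans; [exact HLratio|]. apply Rmult_lt_compat_l; assumption.
Qed.

Definition shift_radius (w : event) (delta : R) : R :=
  4 * norm1 w * delta + 2 * Rabs (mink w w) + 2.

Lemma chron_past_shift (p x y : event) (delta : R) :
  chron_past p x -> (x 0%nat - p 0%nat) / Dist x p < delta ->
  delta * shift_radius (evsub y x) delta <= x 0%nat - p 0%nat ->
  chron_past p y /\ (y 0%nat - p 0%nat) / Dist y p < 2 * (delta + Rabs (y 0%nat - x 0%nat)).
Proof.
  intros [Hu Hu0] Hratio Hfar.
  change (y 0%nat - x 0%nat) with (evsub y x 0%nat).
  change (y 0%nat - p 0%nat) with (evsub y p 0%nat).
  change (x 0%nat - p 0%nat) with (evsub x p 0%nat) in Hratio, Hfar.
  unfold chron_past, timelike_future, Dist in *.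
  set (u := evsub x p) in *. set (w := evsub y x) in *. set (z := evsub y p).
  set (D := sqrt (- mink u u)) in *.
  set (N := norm1 w) in *.
  assert (Hz : mink z z = mink u u + 2 * mink w u + mink w w) by (unfold mink, z, u, w, evsub; ring).
  assert (Hz0 : z 0%nat = u 0%nat + w 0%nat) by (unfold z, u, w, evsub; ring).
  assert (HD : 0 < D) by (apply sqrt_lt_R0; lra).
  assert (HD2 : D * D = - mink u u) by (apply sqrt_sqrt; lra).
  assert (Hud : u 0%nat < delta * D) by (apply Rlt_div_l in Hratio; lra).
  assert (HDu : D <= u 0%nat) by exact (proper_time_le_time u (conj Hu Hu0)).
  assert (Hdelta : 1 < delta) by nra.
  assert (HR : shift_radius w delta < D) by nra.
  unfold shift_radius in HR. fold N in HR.
  assert (Hwu : Rabs (mink w u) <= N * u 0%nat) by exact (Rabs_mink_le w u (conj Hu Hu0)).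
  assert (HN : Rabs (w 0%nat) <= N) by exact (Rabs_time_le_norm1 w).
  pose proof (Rle_abs (mink w u)). pose proof (Rle_abs (mink w w)).
  pose proof (Rabs_pos (mink w w)). pose proof (Rle_abs (w 0%nat)).
  pose proof (Rle_abs (- w 0%nat)). rewrite Rabs_Ropp in *.
  (* [-mink z z] differs from [D^2] by [O(D)], as [|mink w u| <= N u0 < N delta D]. *)
  assert (Hzz : D * D / 4 < - mink z z).
  { rewrite Hz. assert (N * u 0%nat <= N * (delta * D)) by (apply Rmult_le_compat_l; lra).
    assert (D * (4 * N * delta + 2 * Rabs (mink w w) + 2) < D * D)
      by (apply Rmult_lt_compat_l; lra).
    assert (0 <= N * delta * D) by (apply Rmult_le_pos; [apply Rmult_le_pos|]; lra).
    nra. }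
  assert (HDz : D / 2 <= sqrt (- mink z z)).
  { rewrite <- (sqrt_square (D / 2)) by lra. apply sqrt_le_1_alt. lra. }
  assert (N <= N * delta) by nra.
  split; [split; [nra | lra]|].
  apply Rlt_div_l; [lra|].
  assert (Rabs (w 0%nat) <= Rabs (w 0%nat) * D) by nra.
  nra.
Qed.

Lemma in_dom_between (tmin tmax : Rbar) (s t u : R) :
  in_dom tmin tmax s -> in_dom tmin tmax u -> s <= t <= u -> in_dom tmin tmax t.
Proof.
  intros [Hs _] [_ Hu] Hst. split.
  - destruct tmin; simpl in *; auto; lra.
  - destruct tmax; simpl in *; auto; lra.
Qed.

Lemma in_dom_le (tmin tmax : Rbar) (t1 t : R) :
  in_dom tmin tmax t1 -> Rbar_lt tmin t -> t <= t1 -> in_dom tmin tmax t.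
Proof.
  intros [_ H] H1 H2. split; [exact H1|]. destruct tmax; simpl in *; auto; lra.
Qed.

Lemma in_dom_exists_lt (tmin tmax : Rbar) (t1 : R) :
  in_dom tmin tmax t1 -> exists t : R, in_dom tmin tmax t /\ t < t1.
Proof.
  intros Ht1. assert (Hlow : exists t : R, Rbar_lt tmin t /\ t < t1).
  { destruct Ht1 as [H _]. destruct tmin as [a| |]; simpl in *.
    - exists ((a + t1) / 2). split; lra.
    - contradiction.
    - exists (t1 - 1). split; [exact I | lra]. }
  destruct Hlow as [t [Ht Htt]]. exists t. split; [apply (in_dom_le tmin tmax t1); auto; lra | exact Htt].
Qed.

Lemma nondecreasing_below_of_increasing (tmin tmax : Rbar) (t1 : R) (g : R -> R) :
  in_dom tmin tmax t1 ->
  (forall s t : R, in_dom tmin tmax s -> in_dom tmin tmax t -> s < t -> g s < g t) ->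
  forall s t : R, Rbar_lt tmin s -> s <= t <= t1 -> g s <= g t.
Proof.
  intros Ht1 Hg s t Hs Hst. destruct (Rle_lt_or_eq_dec s t (proj1 Hst)) as [Hlt | ->]; [|lra].
  assert (Ht : Rbar_lt tmin t) by (destruct tmin; simpl in *; auto; lra).
  left. apply Hg; [apply (in_dom_le tmin tmax t1); auto; lra .. | exact Hlt].
Qed.

Section Worldline.
Variables (tmin tmax : Rbar) (xi : R -> event).
Hypothesis W : worldline tmin tmax xi.

Lemma worldline_is_derive (a : nat) (t : R) : (a < 4)%nat -> in_dom tmin tmax t ->
  is_derive (Defs.comp xi a) t (vel xi t a).
Proof.
  intros Ha Ht. destruct W as [_ [_ [_ [Hc _]]]].
  apply Derive_correct. exact (Hc a 0%nat t Ha Ht).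
Qed.

Lemma worldline_vel_timelike (t : R) : in_dom tmin tmax t -> timelike_future (vel xi t).
Proof.
  intros Ht. destruct W as [_ [_ [_ [_ [Hv _]]]]]. destruct (Hv t Ht) as [Hm H0].
  split; [lra | exact H0].
Qed.

Lemma worldline_tilted_time_increasing (i : nat) (s : R) : (0 < i < 4)%nat -> Rabs s <= 1 ->
  forall t1 t2, in_dom tmin tmax t1 -> in_dom tmin tmax t2 -> t1 < t2 ->
  xi t1 0%nat + s * xi t1 i < xi t2 0%nat + s * xi t2 i.
Proof.
  intros Hi Hs.
  apply (increasing_of_derive_pos (in_dom tmin tmax) _ (fun t => vel xi t 0%nat + s * vel xi t i)).
  - apply in_dom_between.
  - intros t Ht. split.
    + apply (is_derive_plus (Defs.comp xi 0) (fun t => s * Defs.comp xi i t)).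
      * apply worldline_is_derive; [lia | exact Ht].
      * apply is_derive_scal, worldline_is_derive; [lia | exact Ht].
    + pose proof (spatial_lt_time _ i (worldline_vel_timelike t Ht) Hi) as Hvi.
      assert (Hsv : Rabs (s * vel xi t i) < vel xi t 0%nat).
      { rewrite Rabs_mult. pose proof (Rabs_pos (vel xi t i)). nra. }
      apply Rabs_lt_between in Hsv. lra.
Qed.

Lemma worldline_time_increasing (t1 t2 : R) :
  in_dom tmin tmax t1 -> in_dom tmin tmax t2 -> t1 < t2 -> xi t1 0%nat < xi t2 0%nat.
Proof.
  intros H1 H2 Ht.
  pose proof (worldline_tilted_time_increasing 1 0 ltac:(lia)
    ltac:(rewrite Rabs_R0; lra) t1 t2 H1 H2 Ht). lra.
Qed.

Lemma worldline_time_lim (t1 m : R) : in_dom tmin tmax t1 ->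
  (forall t, in_dom tmin tmax t -> t <= t1 -> m <= xi t 0%nat) ->
  exists l, filterlim (Defs.comp xi 0) (lower_end tmin) (locally l).
Proof.
  intros Ht1 Hbd.
  apply (lower_end_nondecreasing_lim tmin t1 _ m ltac:(apply W) (proj1 Ht1)).
  - apply (nondecreasing_below_of_increasing tmin tmax t1 _ Ht1), worldline_time_increasing.
  - intros t Ht Htt. apply Hbd; [apply (in_dom_le tmin tmax t1) |]; auto.
Qed.

Lemma worldline_spatial_lim (t1 m : R) (i : nat) : in_dom tmin tmax t1 ->
  (forall t, in_dom tmin tmax t -> t <= t1 -> m <= xi t 0%nat) -> (0 < i < 4)%nat ->
  exists l, filterlim (Defs.comp xi i) (lower_end tmin) (locally l).
Proof.
  intros Ht1 Hbd Hi.
  destruct (worldline_time_lim t1 m Ht1 Hbd) as [l0 Hl0].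
  (* [xi^0 + xi^i] is bounded below because [xi^0 >= m] and [xi^0 - xi^i] decreases to the past *)
  assert (Hsum : exists l, filterlim (fun t => xi t 0%nat + 1 * xi t i) (lower_end tmin) (locally l)).
  { apply (lower_end_nondecreasing_lim tmin t1 _
      (2 * m - (xi t1 0%nat + -1 * xi t1 i)) ltac:(apply W) (proj1 Ht1)).
    - apply (nondecreasing_below_of_increasing tmin tmax t1 _ Ht1).
      apply worldline_tilted_time_increasing; [exact Hi | rewrite Rabs_R1; lra].
    - intros t Ht Htt. assert (Hdt : in_dom tmin tmax t) by (apply (in_dom_le tmin tmax t1); auto).
      pose proof (Hbd t Hdt Htt).
      destruct (Rle_lt_or_eq_dec t t1 Htt) as [Hlt | ->]; [|lra].
      pose proof (worldline_tilted_time_increasing i (-1) Hi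
        ltac:(rewrite Rabs_left by lra; lra) t t1 Hdt Ht1 Hlt). lra. }
  destruct Hsum as [l Hl]. exists (l - l0).
  apply (filterlim_ext (fun t => (xi t 0%nat + 1 * xi t i) - Defs.comp xi 0 t)).
  - intros t. unfold Defs.comp. ring.
  - exact (filterlim_Rminus _ _ _ _ _ Hl Hl0).
Qed.

Lemma worldline_converges_of_time_bounded (t1 m : R) : in_dom tmin tmax t1 ->
  (forall t, in_dom tmin tmax t -> t <= t1 -> m <= xi t 0%nat) ->
  exists p, curve_converges xi (lower_end tmin) p.
Proof.
  intros Ht1 Hbd.
  destruct (worldline_time_lim t1 m Ht1 Hbd) as [l0 Hl0].
  destruct (worldline_spatial_lim t1 m 1 Ht1 Hbd ltac:(lia)) as [l1 Hl1].
  destruct (worldline_spatial_lim t1 m 2 Ht1 Hbd ltac:(lia)) as [l2 Hl2].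
  destruct (worldline_spatial_lim t1 m 3 Ht1 Hbd ltac:(lia)) as [l3 Hl3].
  exists (fun a => match a with 0 => l0 | 1 => l1 | 2 => l2 | _ => l3 end)%nat.
  intros a Ha. destruct a as [|[|[|[|]]]]; try lia; assumption.
Qed.

Lemma worldline_time_unbounded_below (t1 M : R) : in_dom tmin tmax t1 ->
  exists t, in_dom tmin tmax t /\ t <= t1 /\ xi t 0%nat < M.
Proof.
  intros Ht1. apply NNPP. intros Hn.
  destruct (worldline_converges_of_time_bounded t1 M Ht1) as [p Hp].
  - intros t Ht Htt. apply Rnot_lt_le. intros HM. apply Hn. eauto.
  - destruct W as [_ [_ [_ [_ [_ [Hlow _]]]]]]. exact (Hlow p Hp).
Qed.

Lemma worldline_time_eventually_below (t1 M : R) : in_dom tmin tmax t1 ->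
  exists t2, in_dom tmin tmax t2 /\ t2 <= t1 /\
    forall t, in_dom tmin tmax t -> t <= t2 -> xi t 0%nat < M.
Proof.
  intros Ht1. destruct (worldline_time_unbounded_below t1 M Ht1) as [t2 [Ht2 [Ht21 HM]]].
  exists t2. split; [exact Ht2|]. split; [exact Ht21|].
  intros t Ht Htt. destruct (Rle_lt_or_eq_dec t t2 Htt) as [Hlt | ->]; [|exact HM].
  pose proof (worldline_time_increasing t t2 Ht Ht2 Hlt). lra.
Qed.

Lemma bounded_away_shift (x y : event) :
  bounded_away tmin tmax xi x -> bounded_away tmin tmax xi y.
Proof.
  intros [delta [tau1 [Hd [Ht1 H]]]].
  destruct (worldline_time_eventually_below tau1
    (x 0%nat - delta * shift_radius (evsub y x) delta) Ht1) as [t2 [Ht2 [Ht21 Hbelow]]].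
  exists (2 * (delta + Rabs (y 0%nat - x 0%nat))), t2.
  split; [pose proof (Rabs_pos (y 0%nat - x 0%nat)); lra|]. split; [exact Ht2|].
  intros tau Htau Hlt. destruct (H tau Htau ltac:(lra)) as [Hpx Hratio].
  apply (chron_past_shift _ _ _ delta Hpx Hratio).
  pose proof (Hbelow tau Htau ltac:(lra)). lra.
Qed.

End Worldline.

Lemma in_future_of_chron_past (tmin tmax : Rbar) (xi : R -> event) (t : R) (y : event) :
  in_dom tmin tmax t -> chron_past (xi t) y -> in_future tmin tmax xi y.
Proof.
  intros Ht [Hm H0]. exists t. split; [exact Ht|].
  set (segment := fun s a => xi t a + s * (y a - xi t a)).
  assert (Hv : forall s a, vel segment s a = evsub y (xi t) a).
  { intros s a. unfold vel, Defs.comp. apply is_derive_unique. unfold segment, evsub.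
    auto_derive; [exact I | ring]. }
  exists segment. split; [|split; [|split]].
  - intros a _. unfold segment. ring.
  - intros a _. unfold segment. ring.
  - intros a s _ _. unfold Defs.comp, segment. auto_derive. exact I.
  - intros s _. unfold timelike_future, mink. rewrite !Hv. split; assumption.
Qed.

Lemma in_future_of_bounded_away (tmin tmax : Rbar) (xi : R -> event) (y : event) :
  bounded_away tmin tmax xi y -> in_future tmin tmax xi y.
Proof.
  intros [delta [tau1 [_ [Ht1 H]]]].
  destruct (in_dom_exists_lt tmin tmax tau1 Ht1) as [t [Ht Htt]].
  exact (in_future_of_chron_past tmin tmax xi t y Ht (proj1 (H t Ht Htt))).
Qed.

Theorem proposition1 (tmin tmax : Rbar) (xi : R -> event) (x : event) :
  worldline tmin tmax xi -> in_future tmin tmax xi x ->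
  (* (i) *)
  (bounded_away tmin tmax xi x ->
     forall L : nat -> nat -> R, orthochronous_lorentz L ->
       bounded_away tmin tmax (fun t => mat_apply L (xi t)) (mat_apply L x)) /\
  (* (ii) *)
  (bounded_away tmin tmax xi x ->
     (forall y : event, in_future tmin tmax xi y) /\
     (forall y : event, bounded_away tmin tmax xi y)).
Proof.
  (* [bounded_away] already puts [x] in the future of [xi]. *)
  intros W _. split.
  - intros Hx L HL. exact (bounded_away_lorentz tmin tmax xi x L HL Hx).
  - intros Hx. split; intros y.
    + exact (in_future_of_bounded_away tmin tmax xi y (bounded_away_shift tmin tmax xi W x y Hx)).
    + exact (bounded_away_shift tmin tmax xi W x y Hx).
Qed.
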